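(* If the MDE $\check{\Sigma}$ of $\Sigma$ under ${\rm M}_+(G)$ exists, it is the unique positive definite solution to the following system, where $\check K=\check{\Sigma}^{-1}$ and $\widehat{K}=\widehat{\Sigma}^{-1}$: (i) $\check{\Sigma}_{ij} \geq 0$ for $ij\in E(G)$; (ii) $\widehat{\Sigma}_{ij}=S_{ij}$ for $ij\in E(G)$; (iii) $\widehat{\Sigma}_{ii}=S_{ii}$ for $i\in V(G)$; (iv) $\check K_{ij} = \widehat{K}_{ij}=0$ for $ij\notin E(G)$; (v) $\check K_{ij} \leq \widehat{K}_{ij}$ for $ij\in E(G)$; (vi) $\check K_{ii} =\widehat{K}_{ii}$ for $i\in V(G)$; (vii) $\check{\Sigma}_{ij}(\widehat{K}_{ij}- \check K_{ij})=0$ for $ij\in E(G)$.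
   Context: Let $G=(V,E)$ be an undirected graph on $V=\{1,\ldots,d\}$, and let $S$ be the sample covariance matrix of $n$ i.i.d. observations from $N(0,\Sigma^* )$. $M(G)$ is the Gaussian graphical model ($(\Sigma^{-1})_{ij}=0$ for $ij\notin E$), $A(G)$ the set of positive definite $\Sigma$ with $\Sigma_{ij}\geq 0$ for all $ij\in E$ (locally associated Gaussian distributions), and ${\rm M}_+(G)=A(G)\cap M(G)$. $\widehat K$ is the maximum likelihood estimate of $K=\Sigma^{-1}$ in $M(G)$. The mixed dual estimate (MDE) $\check\Sigma$ is the solution of minimizing $-\log\det\Sigma+\operatorname{tr}(\Sigma\widehat K)$ over positive definite $\Sigma$ subject to $\Sigma_{ij}\geq 0$ for all $ij\in E(G)$. *)

From HB Require Import structures.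
From mathcomp Require Import all_boot all_order all_algebra.
From mathcomp Require Import reals exp.
Set Implicit Arguments. Unset Strict Implicit. Unset Printing Implicit Defensive.
Import Order.TTheory GRing.Theory Num.Theory.
Local Open Scope ring_scope.

Definition simple_graph (d : nat) (E : rel 'I_d) : Prop :=
  (forall i j, E i j = E j i) /\ (forall i, ~~ E i i).

Definition posdef (R : realType) (d : nat) (A : 'M[R]_d) : Prop :=
  A^T = A /\ forall v : 'cV[R]_d, v != 0 -> 0 < (v^T *m A *m v) 0 0.

(* Sample covariance of n observations (rows of X), mean known to be zero:
   S = (1/n) sum_k x_k x_k^T = (1/n) X^T X. *)
Definition sample_cov (R : realType) (n d : nat) (X : 'M[R]_(n, d)) : 'M[R]_d :=
  n%:R^-1 *: (X^T *m X).

Definition in_model (R : realType) (d : nat) (E : rel 'I_d) (K : 'M[R]_d) : Prop :=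
  forall i j, i != j -> ~~ E i j -> K i j = 0.

Definition is_MLE (R : realType) (d : nat) (E : rel 'I_d) (S Khat : 'M[R]_d) : Prop :=
  posdef Khat /\ in_model E Khat /\
  forall K : 'M[R]_d, posdef K -> in_model E K ->
    ln (\det K) - \tr (K *m S) <= ln (\det Khat) - \tr (Khat *m S).

Definition loc_assoc (R : realType) (d : nat) (E : rel 'I_d) (Sig : 'M[R]_d) : Prop :=
  forall i j, E i j -> 0 <= Sig i j.

Definition mde_obj (R : realType) (d : nat) (Khat Sig : 'M[R]_d) : R :=
  - ln (\det Sig) + \tr (Sig *m Khat).

Definition is_MDE (R : realType) (d : nat) (E : rel 'I_d) (Khat Sigc : 'M[R]_d) : Prop :=
  posdef Sigc /\ loc_assoc E Sigc /\
  forall Sig : 'M[R]_d, posdef Sig -> loc_assoc E Sig ->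
    mde_obj Khat Sigc <= mde_obj Khat Sig.

Definition mde_system (R : realType) (d : nat) (E : rel 'I_d) (S Khat Sigc : 'M[R]_d)
  : Prop :=
  let Kc := invmx Sigc in
  let Shat := invmx Khat in
  (forall i j, E i j -> 0 <= Sigc i j) /\
      (forall i j, E i j -> Shat i j = S i j) /\
      (forall i, Shat i i = S i i) /\
      (forall i j, i != j -> ~~ E i j -> Kc i j = 0 /\ Khat i j = 0) /\
      (forall i j, E i j -> Kc i j <= Khat i j) /\
      (forall i, Kc i i = Khat i i) /\
      (forall i j, E i j -> Sigc i j * (Khat i j - Kc i j) = 0).

(* The MLE and the MDE optimise [ln \det] plus a linear term over convex sets of positive
   definite matrices.  The directional derivative of [ln \det] at [A] along a symmetric [H]
   is [\tr (A^-1 H)]: concavity, [ln \det B - ln \det A <= \tr (A^-1 (B - A))] (from a Cholesky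
   factorisation and [ln x <= x - 1]), bounds the difference quotients, and
   [t |-> \tr ((A + t H)^-1 H)] is a rational function, hence continuous at [0].  Optimality
   along the directions [E_ij + E_ji] and their opposites gives (ii)-(vii); (i) is feasibility.
   For uniqueness, let [Sig1] and [Sig2] solve the system, [K1], [K2] be their inverses and
   [D = Sig1 - Sig2].  Then [K2 D K1 = K2 - K1], and (iv)-(vii) make every product
   [D_ab (K2 - K1)_ab] nonpositive, so [\tr (D K2 D K1) <= 0]; as [K1] and [K2] are positive
   definite this forces [D = 0]. *)

From mathcomp Require Import all_boot all_order all_algebra.
From mathcomp Require Import reals exp.
From mathcomp Require Import ring lra.
Set Implicit Arguments. Unset Strict Implicit. Unset Printing Implicit Defensive.
Import Order.TTheory GRing.Theory Num.Theory.
Local Open Scope ring_scope.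

Section PositiveDefinite.
Variable R : realType.
Implicit Types d : nat.

Lemma posdef_quad_ge0 d (A : 'M[R]_d) (v : 'cV_d) : posdef A -> 0 <= (v^T *m A *m v) 0 0.
Proof.
move=> PA; have [->|v0] := eqVneq v 0; first by rewrite mulmx0 mxE.
exact/ltW/PA.2.
Qed.

Lemma posdef_quad_eq0 d (A : 'M[R]_d) (v : 'cV_d) :
  posdef A -> (v^T *m A *m v) 0 0 = 0 -> v = 0.
Proof.
move=> PA q0; have [//|v0] := eqVneq v 0.
by have := PA.2 v v0; rewrite q0 ltxx.
Qed.

Lemma posdef_schur d (a : R) (b : 'cV_d) (C : 'M_d) :
  posdef (block_mx a%:M b^T b C : 'M_(1 + d)) ->
  0 < a /\ posdef (C - a^-1 *: (b *m b^T)).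
Proof.
case=> + PA; rewrite tr_block_mx trmxK => /eq_block_mx [_ _ _ sC].
have a_gt0 : 0 < a.
  have := PA (col_mx 1 0); rewrite col_mx_eq0 oner_eq0 => /(_ isT).
  rewrite tr_col_mx mul_row_block mul_row_col !trmx0 trmx1 !mul0mx !mul1mx.
  by rewrite mulmx1 mulmx0 !addr0 mxE eqxx mulr1n.
split=> //; split=> [|v v0]; first by rewrite linearB /= linearZ /= trmx_mul trmxK sC.
set s := (b^T *m v) 0 0.
have bv : b^T *m v = s%:M by rewrite {1}[b^T *m v]mx11_scalar.
have vb : v^T *m b = s%:M by rewrite -[b in v^T *m b]trmxK -trmx_mul bv tr_scalar_mx.
(* On the test vector [(-s/a, v)] the block form reduces to the Schur complement form. *)
have := PA (col_mx (- (a^-1 * s))%:M v).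
rewrite col_mx_eq0 (negbTE v0) andbF => /(_ isT).
rewrite tr_col_mx mul_row_block mul_row_col tr_scalar_mx !mulmxDl vb -!scalar_mxM.
rewrite -!mulmxA bv -!scalar_mxM mulmxBl mulmxBr -scalemxAl -scalemxAr -mulmxA bv.
rewrite mul_mx_scalar -scalemxAr vb !scale_scalar_mx !mxE !eqxx !mulr1n.
set q := \sum_j _.
suff -> : - (a^-1 * s) * a * - (a^-1 * s) + s * - (a^-1 * s) + (- (a^-1 * s) * s + q)
   = q - a^-1 * (s * s) by [].
by field; rewrite gt_eqF.
Qed.

Lemma posdef_cholesky d (A : 'M[R]_d) : posdef A ->
  exists L : 'M_d, [/\ L *m L^T = A, is_trig_mx L & forall i, 0 < L i i].
Proof.
elim: d A => [|d IH] A PA.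
  exists 0; split=> [||[]//]; first by rewrite [A]flatmx0 [_ *m _]flatmx0.
  by apply/is_trig_mxP => -[].
pose B : 'M_(1 + d) := A.
have EB : B = block_mx (ulsubmx B) (dlsubmx B)^T (dlsubmx B) (drsubmx B).
  by rewrite trmx_dlsub (PA.1 : B^T = B) submxK.
move: PA; rewrite -/B EB [ulsubmx B]mx11_scalar => /posdef_schur[a_gt0 PS].
have [L [EL trigL posL]] := IH _ PS.
set a := ulsubmx B 0 0 in a_gt0 EB *; set b := dlsubmx B in EL EB *.
set l := Num.sqrt a.
have l_gt0 : 0 < l by rewrite sqrtr_gt0.
have ll : l * l = a by rewrite -expr2 sqr_sqrtr // ltW.
have lV : l * l^-1 = 1 by rewrite mulfV ?gt_eqF.
exists (block_mx l%:M 0 (l^-1 *: b) L : 'M_(1 + d)); split.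
- rewrite (@tr_block_mx _ 1 d 1 d) (@mulmx_block _ 1 d 1 d 1 d).
  rewrite !trmx0 !mul0mx !mulmx0 !addr0 tr_scalar_mx; congr (@block_mx _ 1 d 1 d _ _ _ _).
  + by rewrite -scalar_mxM ll.
  + by rewrite mul_scalar_mx linearZ /= scalerA lV scale1r.
  + by rewrite mul_mx_scalar scalerA lV scale1r.
  + by rewrite EL linearZ /= -scalemxAl -scalemxAr scalerA -invfM ll addrC subrK.
- by rewrite (@is_trig_block_mx _ 1 d 1 d) // eqxx mx11_is_trig trigL.
- move=> i; case: (@split_ordP 1 d i) => i' ->.
  + by rewrite (@block_mxEul _ 1 d 1 d) ord1 mxE eqxx mulr1n.
  + by rewrite (@block_mxEdr _ 1 d 1 d).
Qed.

Lemma det_trig_gt0 d (L : 'M[R]_d) :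
  is_trig_mx L -> (forall i, 0 < L i i) -> 0 < \det L.
Proof. by move=> trigL posL; rewrite det_trig //; apply: prodr_gt0. Qed.

Lemma posdef_det_gt0 d (A : 'M[R]_d) : posdef A -> 0 < \det A.
Proof.
move=> /posdef_cholesky[L [<- trigL posL]].
by rewrite det_mulmx det_tr mulr_gt0 // det_trig_gt0.
Qed.

Lemma posdef_unitmx d (A : 'M[R]_d) : posdef A -> A \in unitmx.
Proof. by move=> /posdef_det_gt0 detA; rewrite unitmxE unitfE gt_eqF. Qed.

Lemma posdef_factor d (A : 'M[R]_d) : posdef A ->
  exists2 L : 'M_d, L *m L^T = A & L \in unitmx.
Proof.
move=> /posdef_cholesky[L [EL trigL posL]]; exists L => //.
by rewrite unitmxE unitfE gt_eqF // det_trig_gt0.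
Qed.

Lemma posdef_congr d (A P : 'M[R]_d) : posdef A -> P \in unitmx ->
  posdef (P^T *m A *m P).
Proof.
move=> [sA PA] uP; split=> [|v v0]; first by rewrite !trmx_mul trmxK sA mulmxA.
have Pv0 : P *m v != 0 by apply: contra v0 => /eqP Pv; rewrite -[v](mulKmx uP) Pv mulmx0.
by have := PA _ Pv0; rewrite trmx_mul !mulmxA.
Qed.

Lemma invmx_mulmx d (A B : 'M[R]_d) : A \in unitmx -> B \in unitmx ->
  invmx (A *m B) = invmx B *m invmx A.
Proof.
move=> uA uB; have uAB : A *m B \in unitmx by rewrite unitmx_mul uA.
have -> : invmx B *m invmx A = invmx (A *m B) *m (A *m B) *m (invmx B *m invmx A).
  by rewrite mulVmx // mul1mx.
by rewrite -!mulmxA (mulKVmx uB) (mulmxV uA) mulmx1.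
Qed.

Lemma sym_invmx d (A : 'M[R]_d) : A^T = A -> (invmx A)^T = invmx A.
Proof. by move=> sA; rewrite trmx_inv sA. Qed.

Lemma posdef_invmx d (A : 'M[R]_d) : posdef A -> posdef (invmx A).
Proof.
move=> PA; have uA := posdef_unitmx PA.
have -> : invmx A = (invmx A)^T *m A *m invmx A.
  by rewrite sym_invmx ?PA.1 // mulVmx // mul1mx.
by apply: posdef_congr; rewrite ?unitmx_inv.
Qed.

Lemma sym_mxE d (A : 'M[R]_d) : A^T = A -> forall i j, A j i = A i j.
Proof. by move=> sA i j; rewrite -[in LHS]sA mxE. Qed.

Lemma mxquad_diag d (A P : 'M[R]_d) k :
  (A^T *m P *m A) k k = ((col k A)^T *m P *m col k A) 0 0.
Proof. by rewrite tr_col -row_mul !mxE; apply: eq_bigr => j _; rewrite !mxE. Qed.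

Lemma mxtrace_sandwich_le0 d (D P Q : 'M[R]_d) : D^T = D -> posdef P -> posdef Q ->
  \tr (D *m P *m D *m Q) <= 0 -> D = 0.
Proof.
move=> sD PP PQ; have [L EL uL] := posdef_factor PQ.
set N := D *m L.
have trE : \tr (D *m P *m D *m Q) = \sum_k ((col k N)^T *m P *m col k N) 0 0.
  have NT : N^T = L^T *m D by rewrite trmx_mul sD.
  rewrite -EL mulmxA mxtrace_mulC !mulmxA -NT -mulmxA; apply: eq_bigr => k _.
  exact: (mxquad_diag N P k).
have terms_ge0 k : 0 <= ((col k N)^T *m P *m col k N) 0 0 by apply: posdef_quad_ge0.
move=> tr_le0; have sum0 : \sum_k ((col k N)^T *m P *m col k N) 0 0 = 0.
  by apply/le_anti; rewrite -[X in X <= 0]trE tr_le0 sumr_ge0.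
have col0 k : col k N = 0.
  by apply: (posdef_quad_eq0 PP); apply: (psumr_eq0P _ sum0).
have N0 : N = 0 by apply/matrixP => i k; move/matrixP: (col0 k) => /(_ i 0); rewrite !mxE.
by rewrite -[D]mulmx1 -(mulmxV uL) mulmxA -/N N0 mul0mx.
Qed.

End PositiveDefinite.

Section LogDet.
Variable R : realType.
Implicit Types d : nat.

Lemma ln_prod_le_sum d (x : 'I_d -> R) : (forall i, 0 < x i) ->
  ln (\prod_i x i) <= \sum_i (x i - 1).
Proof.
move=> x_gt0; suff [] : 0 < \prod_i x i /\ ln (\prod_i x i) <= \sum_i (x i - 1) by [].
apply: (big_rec2 (fun p s => 0 < p /\ ln p <= s)); first by rewrite ln1.
move=> i p s _ [p_gt0 le_ps]; split; first by rewrite mulr_gt0.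
rewrite lnM ?posrE // lerD //.
by have := @le_ln1Dx R (x i - 1); rewrite addrCA subrr addr0; apply; rewrite ltrBrDl subrr.
Qed.

Lemma diag_sqr_le_mxtrace d (N : 'M[R]_d) i : N i i * N i i <= (N *m N^T) i i.
Proof.
rewrite mxE (bigD1 i) //= mxE lerDl.
by apply: sumr_ge0 => j _; rewrite mxE -expr2 sqr_ge0.
Qed.

Lemma ln_det_le_mxtrace d (M : 'M[R]_d) : posdef M -> ln (\det M) <= \tr M - d%:R.
Proof.
move=> /posdef_cholesky[N [<- trigN posN]].
rewrite det_mulmx det_tr det_trig // -big_split /=.
apply: (le_trans (ln_prod_le_sum (fun i => mulr_gt0 (posN i) (posN i)))).
rewrite /mxtrace sumrB sumr_const card_ord lerD2r.
by apply: ler_sum => i _; apply: diag_sqr_le_mxtrace.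
Qed.

Lemma ln_det_concave d (A B : 'M[R]_d) : posdef A -> posdef B ->
  ln (\det B) - ln (\det A) <= \tr (invmx A *m (B - A)).
Proof.
move=> PA PB; have [L EL uL] := posdef_factor PA.
have uLT : L^T \in unitmx by rewrite unitmx_tr.
set P := invmx L^T; have uP : P \in unitmx by rewrite unitmx_inv.
have PT : P^T = invmx L by rewrite trmx_inv trmxK.
set M := P^T *m B *m P; have PM : posdef M by apply: posdef_congr.
have EB : B = L *m M *m L^T.
  by rewrite /M PT !mulmxA (mulmxV uL) mul1mx -mulmxA (mulVmx uLT) mulmx1.
have detB : \det B = \det A * \det M by rewrite EB -EL !det_mulmx !det_tr mulrAC.
have iA : invmx A = P *m P^T.
  by rewrite -EL invmx_mulmx // PT.
rewrite detB lnM ?posrE ?posdef_det_gt0 // addrC addKr mulmxBr linearB /=.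
rewrite mulVmx ?posdef_unitmx // mxtrace1 iA -mulmxA mxtrace_mulC -/M.
exact: ln_det_le_mxtrace.
Qed.

Lemma norm_entry_mul_le_dot d (w : 'cV[R]_d) i j :
  `|w i 0| * `|w j 0| <= (w^T *m w) 0 0.
Proof.
have sqr_le k : `|w k 0| * `|w k 0| <= (w^T *m w) 0 0.
  rewrite -expr2 real_normK ?num_real // expr2 mxE (bigD1 k) //= !mxE lerDl.
  by apply: sumr_ge0 => l _; rewrite !mxE -expr2 sqr_ge0.
wlog le_ij : i j / `|w i 0| <= `|w j 0|.
  by move=> sym; have [/sym|/ltW/sym] := leP `|w i 0| `|w j 0|; rewrite // mulrC.
exact: le_trans (ler_wpM2r (normr_ge0 _) le_ij) (sqr_le j).
Qed.

Lemma quad_form_norm_le d (G : 'M[R]_d) (w : 'cV[R]_d) :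
  `|(w^T *m G *m w) 0 0| <= (\sum_j \sum_i `|G i j|) * (w^T *m w) 0 0.
Proof.
rewrite mxE mulr_suml; apply: (le_trans (ler_norm_sum _ _ _)).
apply: ler_sum => j _; rewrite mxE normrM mulr_suml.
apply: (le_trans (ler_wpM2r (normr_ge0 _) (ler_norm_sum _ _ _))).
rewrite mulr_suml; apply: ler_sum => i _.
rewrite normrM mxE [`|w i 0| * _]mulrC -mulrA.
by apply: ler_wpM2l => //; apply: norm_entry_mul_le_dot.
Qed.

Lemma posdef_perturb d (A H : 'M[R]_d) : posdef A -> H^T = H ->
  exists2 eta : R, 0 < eta & forall t, `|t| < eta -> posdef (A + t *: H).
Proof.
move=> PA sH; have [L EL uL] := posdef_factor PA.
have uLT : L^T \in unitmx by rewrite unitmx_tr.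
set G := invmx L *m H *m invmx L^T.
set c := \sum_j \sum_i `|G i j|.
have c_ge0 : 0 <= c by apply: sumr_ge0 => j _; apply: sumr_ge0.
exists (c + 1)^-1 => [|t lt_t]; first by rewrite invr_gt0 ltr_wpDl.
split=> [|v v0]; first by rewrite linearD /= linearZ /= PA.1 sH.
set w := L^T *m v.
have Av : (v^T *m A *m v) 0 0 = (w^T *m w) 0 0.
  by rewrite -EL /w trmx_mul trmxK !mulmxA.
have Hv : (v^T *m H *m v) 0 0 = (w^T *m G *m w) 0 0.
  have -> : H = L *m G *m L^T.
    by rewrite /G !mulmxA (mulmxV uL) mul1mx -mulmxA (mulVmx uLT) mulmx1.
  by rewrite /w trmx_mul trmxK !mulmxA.
have q_gt0 : 0 < (w^T *m w) 0 0 by rewrite -Av; apply: PA.2.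
rewrite mulmxDr mulmxDl -scalemxAr -scalemxAl mxE [in X in _ + X]mxE Av Hv.
set q := (w^T *m w) 0 0; set x := (w^T *m G *m w) 0 0.
have x_le : `|x| <= c * q by apply: quad_form_norm_le.
have tc_lt1 : `|t| * c < 1.
  move: lt_t; rewrite -(ltr_pM2r (ltr_wpDl c_ge0 ltr01)) mulVf ?gt_eqF ?ltr_wpDl //.
  by apply: le_lt_trans; rewrite ler_wpM2l // lerDl.
have tx_le : `|t| * `|x| <= `|t| * c * q by rewrite -mulrA ler_wpM2l.
have tcq_lt : `|t| * c * q < q by rewrite gtr_pMl.
have : - (t * x) <= `|t| * `|x| by rewrite -normrM -normrN ler_norm.
lra.
Qed.

Lemma horner_norm_le (p : {poly R}) (t : R) : `|t| <= 1 ->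
  `|p.[t]| <= \sum_(i < size p) `|p`_i|.
Proof.
move=> t_le1; rewrite horner_coef; apply: (le_trans (ler_norm_sum _ _ _)).
apply: ler_sum => i _; rewrite normrM normrX.
by apply: ler_piMr => //; apply: exprn_ile1.
Qed.

Lemma poly_le0_at0 (p : {poly R}) (del : R) : 0 < del ->
  (forall t, 0 < t -> t < del -> p.[t] <= 0) -> p.[0] <= 0.
Proof.
move=> del_gt0 p_le0; rewrite leNgt; apply/negP => p0_gt0.
have [q Eq] : exists q, p = q * 'X + p.[0]%:P.
  have /factor_theorem[q Eq] : root (p - p.[0]%:P) 0.
    by rewrite /root hornerD hornerN hornerC subrr.
  by exists q; rewrite subr0 in Eq; rewrite -Eq subrK.
set B := \sum_(i < size q) `|q`_i|.
have B1_gt0 : 0 < B + 1 by rewrite ltr_wpDl ?sumr_ge0.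
(* At [t = min(del, 1, p(0) / (B + 1)) / 2] the term [t q(t)] cannot cancel [p(0)]. *)
set t := Num.min del (Num.min 1 (p.[0] / (B + 1))) / 2.
have t_gt0 : 0 < t by rewrite divr_gt0 // !lt_min del_gt0 ltr01 divr_gt0.
have t_lt : t < Num.min del (Num.min 1 (p.[0] / (B + 1))).
  by rewrite ltr_pdivrMr // ltr_pMr ?ltr1n // !lt_min del_gt0 ltr01 divr_gt0.
move: t_lt; rewrite !lt_min => /and3P[t_del t_1 t_p0].
have q_le : `|q.[t]| <= B by rewrite horner_norm_le // ger0_norm ltW.
have : - (q.[t] * t) <= B * t.
  apply: (le_trans (ler_norm _)).
  by rewrite normrN normrM (gtr0_norm t_gt0) ler_pM2r.
have : (B + 1) * t < p.[0] by rewrite mulrC -ltr_pdivlMr.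
have pt : p.[t] = q.[t] * t + p.[0] by rewrite {1}Eq hornerD hornerM hornerX hornerC.
have := p_le0 t t_gt0 t_del; rewrite pt.
lra.
Qed.

Lemma mxtrace_invmx_pencil_rational d (A H : 'M[R]_d) : exists p q : {poly R},
  forall t, p.[t] = \det (A + t *: H) /\
    (A + t *: H \in unitmx -> \tr (invmx (A + t *: H) *m H) = q.[t] / p.[t]).
Proof.
pose P : 'M[{poly R}]_d := map_mx polyC A + 'X *: map_mx polyC H.
exists (\det P), (\tr (\adj P *m map_mx polyC H)) => t.
have evalP : map_mx (horner_eval t) P = A + t *: H.
  by apply/matrixP => i j; rewrite !mxE /= horner_evalE hornerD hornerM hornerX !hornerC.
have evalH : map_mx (horner_eval t) (map_mx polyC H) = H.
  by apply/matrixP => i j; rewrite !mxE /= horner_evalE hornerC.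
have -> : (\det P).[t] = \det (A + t *: H) by rewrite -horner_evalE -det_map_mx evalP.
split=> // uAH.
rewrite -horner_evalE -trace_map_mx map_mxM map_mx_adj evalP evalH.
by rewrite /invmx uAH -scalemxAl mxtraceZ mulrC.
Qed.

(* [\tr (A^-1 H)] is the right derivative at [0] of [t |-> ln (\det (A + t H))]. *)
Lemma mxtrace_invmx_le_lndet_slope d (A H : 'M[R]_d) (c del : R) :
  posdef A -> H^T = H -> 0 < del ->
  (forall t, 0 < t -> t < del -> posdef (A + t *: H) ->
     ln (\det (A + t *: H)) - ln (\det A) <= t * c) ->
  \tr (invmx A *m H) <= c.
Proof.
move=> PA sH del_gt0 slope_le.
have [eta eta_gt0 P_AtH] := posdef_perturb PA sH.
have [p [q pq]] := mxtrace_invmx_pencil_rational A H.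
have trace_le_c t : posdef (A + t *: H) ->
    (\tr (invmx (A + t *: H) *m H) <= c) = ((q - c *: p).[t] <= 0).
  move=> Pt; have [pt qt] := pq t.
  rewrite (qt (posdef_unitmx Pt)) hornerD hornerN hornerZ pt subr_le0.
  by rewrite ler_pdivrMr ?posdef_det_gt0 // mulrC.
have A0 : A + 0 *: H = A by rewrite scale0r addr0.
rewrite -[A in invmx A]A0 trace_le_c ?A0 //.
apply: (poly_le0_at0 (del := Num.min del eta)); first by rewrite lt_min del_gt0.
move=> t t_gt0; rewrite lt_min => /andP[t_del t_eta].
have Pt : posdef (A + t *: H) by apply: P_AtH; rewrite gtr0_norm.
rewrite -trace_le_c // -(ler_pM2l t_gt0).
have := ln_det_concave Pt PA.
rewrite opprD addNKr mulmxN -scalemxAr linearN /= mxtraceZ.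
have := slope_le t t_gt0 t_del Pt.
lra.
Qed.

End LogDet.

Section SymmetricDelta.
Variable R : realType.
Implicit Types d : nat.

Definition sym_delta_mx d (i j : 'I_d) : 'M[R]_d := delta_mx i j + delta_mx j i.

Lemma sym_delta_mxE d (i j a b : 'I_d) :
  sym_delta_mx i j a b = ((a == i) && (b == j))%:R + ((a == j) && (b == i))%:R.
Proof. by rewrite !mxE. Qed.

Lemma trmx_sym_delta d (i j : 'I_d) : (sym_delta_mx i j)^T = sym_delta_mx i j.
Proof. by rewrite linearD /= !trmx_delta addrC. Qed.

Lemma sym_delta_mx_ge0 d (i j a b : 'I_d) : 0 <= sym_delta_mx i j a b.
Proof. by rewrite sym_delta_mxE addr_ge0. Qed.

Lemma sym_delta_mx_eq0 d (P : rel 'I_d) (i j a b : 'I_d) : (forall x y, P x y = P y x) ->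
  P i j -> ~~ P a b -> sym_delta_mx i j a b = 0.
Proof.
move=> sP Pij nPab; rewrite sym_delta_mxE.
have -> : (a == i) && (b == j) = false.
  by apply/negP => /andP[/eqP ai /eqP bj]; rewrite ai bj Pij in nPab.
have -> : (a == j) && (b == i) = false.
  by apply/negP => /andP[/eqP aj /eqP bi]; rewrite aj bi sP Pij in nPab.
by rewrite addr0.
Qed.

Lemma mxtrace_mul_delta d (A : 'M[R]_d) (i j : 'I_d) : \tr (A *m delta_mx i j) = A j i.
Proof.
rewrite -(@mul_delta_mx R d 1 d 0 i j) mulmxA mxtrace_mulC mulmxA trace_mx11.
by rewrite -rowE -colE !mxE.
Qed.

Lemma mxtrace_mul_sym_delta d (A : 'M[R]_d) (i j : 'I_d) :
  A^T = A -> \tr (A *m sym_delta_mx i j) = 2 * A i j.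
Proof.
by move=> sA; rewrite mulmxDr mxtraceD !mxtrace_mul_delta (sym_mxE sA) -mulr2n mulr_natl.
Qed.

End SymmetricDelta.

Section Optimality.
Variable R : realType.
Variables (d : nat) (E : rel 'I_d).
Hypothesis sgE : simple_graph E.
Implicit Types (S K Kh Sc G : 'M[R]_d) (i j : 'I_d).

Lemma in_model_sym_delta i j : (i == j) || E i j -> in_model E (sym_delta_mx R i j).
Proof.
move=> ij a b ab nab; apply: (@sym_delta_mx_eq0 R d (fun x y => (x == y) || E x y)) => //.
  by move=> x y; rewrite eq_sym sgE.1.
by rewrite negb_or ab.
Qed.

Lemma sym_delta_mx_edge_eq0 i j a b : ~~ E i j -> E a b -> sym_delta_mx R i j a b = 0.
Proof.
move=> nij eab; apply: (@sym_delta_mx_eq0 R d (fun x y => ~~ E x y)) => //.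
  by move=> x y; rewrite sgE.1.
by rewrite eab.
Qed.

Lemma loc_assoc_shift Sc G t : loc_assoc E Sc ->
  (forall a b, E a b -> 0 <= t * G a b) -> loc_assoc E (Sc + t *: G).
Proof. by move=> la tG a b eab; rewrite !mxE addr_ge0 ?la ?tG. Qed.

Lemma MLE_stationary S K G : is_MLE E S K -> G^T = G -> in_model E G ->
  \tr (invmx K *m G) = \tr (S *m G).
Proof.
move=> [PK [mK opt]].
have slope_le G' : G'^T = G' -> in_model E G' -> \tr (invmx K *m G') <= \tr (S *m G').
  move=> sG' mG'; apply: (mxtrace_invmx_le_lndet_slope PK sG' ltr01) => t _ _ Pt.
  have mt : in_model E (K + t *: G').
    by move=> a b ab nab; rewrite !mxE mK ?mG' // mulr0 addr0.
  have := opt _ Pt mt.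
  rewrite mulmxDl mxtraceD -scalemxAl mxtraceZ [\tr (G' *m S)]mxtrace_mulC.
  lra.
move=> sG mG; apply/le_anti; rewrite slope_le //=.
have sN : (- G)^T = - G by rewrite linearN /= sG.
have mN : in_model E (- G) by move=> a b ab nab; rewrite mxE mG ?oppr0.
by have := slope_le _ sN mN; rewrite !mulmxN !linearN /= lerN2.
Qed.

Lemma MDE_slope_le Kh Sc G del : is_MDE E Kh Sc -> G^T = G -> 0 < del ->
  (forall t, 0 < t -> t < del -> loc_assoc E (Sc + t *: G)) ->
  \tr (invmx Sc *m G) <= \tr (Kh *m G).
Proof.
move=> [PS [_ opt]] sG del_gt0 la.
apply: (mxtrace_invmx_le_lndet_slope PS sG del_gt0) => t t_gt0 t_del Pt.
have := opt _ Pt (la t t_gt0 t_del).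
rewrite /mde_obj mulmxDl mxtraceD -scalemxAl mxtraceZ [\tr (G *m Kh)]mxtrace_mulC.
lra.
Qed.

Lemma MLE_invmx_eq S K i j : S^T = S -> is_MLE E S K -> (i == j) || E i j ->
  invmx K i j = S i j.
Proof.
move=> sS MLE ij.
have := MLE_stationary MLE (trmx_sym_delta R i j) (in_model_sym_delta ij).
rewrite !mxtrace_mul_sym_delta ?sym_invmx ?MLE.1.1 //.
lra.
Qed.

Lemma MDE_invmx_le Kh Sc i j : Kh^T = Kh -> is_MDE E Kh Sc -> invmx Sc i j <= Kh i j.
Proof.
move=> sK MDE.
have la t : 0 < t -> t < 1 -> loc_assoc E (Sc + t *: sym_delta_mx R i j).
  move=> t_gt0 _; apply: loc_assoc_shift MDE.2.1 _ => a b _.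
  by rewrite mulr_ge0 ?sym_delta_mx_ge0 // ltW.
have := MDE_slope_le MDE (trmx_sym_delta R i j) ltr01 la.
by rewrite !mxtrace_mul_sym_delta ?sym_invmx ?MDE.1.1 // ler_pM2l.
Qed.

Lemma MDE_invmx_ge Kh Sc i j del : Kh^T = Kh -> is_MDE E Kh Sc -> 0 < del ->
  (forall t, 0 < t -> t < del -> loc_assoc E (Sc - t *: sym_delta_mx R i j)) ->
  Kh i j <= invmx Sc i j.
Proof.
move=> sK MDE del_gt0 la.
have sN : (- sym_delta_mx R i j)^T = - sym_delta_mx R i j by rewrite linearN /= trmx_sym_delta.
have laN t : 0 < t -> t < del -> loc_assoc E (Sc + t *: - sym_delta_mx R i j).
  by move=> t_gt0 t_del; rewrite scalerN; apply: la.
have := MDE_slope_le MDE sN del_gt0 laN.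
rewrite !mulmxN !linearN /= !mxtrace_mul_sym_delta ?sym_invmx ?MDE.1.1 //.
by rewrite lerN2 ler_pM2l.
Qed.

Lemma MDE_invmx_nonedge Kh Sc i j : Kh^T = Kh -> is_MDE E Kh Sc -> ~~ E i j ->
  invmx Sc i j = Kh i j.
Proof.
move=> sK MDE nij; apply/le_anti; rewrite MDE_invmx_le //=.
apply: (MDE_invmx_ge sK MDE ltr01) => t _ _; rewrite -scalerN.
by apply: loc_assoc_shift MDE.2.1 _ => a b eab; rewrite mxE sym_delta_mx_edge_eq0 ?oppr0 ?mulr0.
Qed.

Lemma MDE_slackness Kh Sc i j : Kh^T = Kh -> is_MDE E Kh Sc -> E i j ->
  Sc i j * (Kh i j - invmx Sc i j) = 0.
Proof.
move=> sK MDE eij; have [PS [la _]] := MDE.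
have [->|Sij_neq0] := eqVneq (Sc i j) 0; first by rewrite mul0r.
have Sij_gt0 : 0 < Sc i j by rewrite lt_def Sij_neq0 la.
have ij : i != j by apply: contraTneq eij => ->; rewrite (negbTE (sgE.2 j)).
suff <- : invmx Sc i j = Kh i j by rewrite subrr mulr0.
apply/le_anti; rewrite MDE_invmx_le //=.
apply: (MDE_invmx_ge sK MDE Sij_gt0) => t t_gt0 t_lt a b eab.
rewrite !mxE.
have [/andP[/eqP-> /eqP->]|_] := boolP ((a == i) && (b == j)).
  by rewrite (negbTE ij) /= addr0 mulr1; lra.
have [/andP[/eqP-> /eqP->]|_] := boolP ((a == j) && (b == i)).
  by rewrite add0r mulr1 (sym_mxE PS.1); lra.
by rewrite addr0 mulr0 subr0 la.
Qed.

Lemma MDE_solves_system S Kh Sc : S^T = S -> is_MLE E S Kh -> is_MDE E Kh Sc ->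
  mde_system E S Kh Sc.
Proof.
move=> sS MLE MDE; have sK : Kh^T = Kh := MLE.1.1.
split; first exact: MDE.2.1.
split; first by move=> i j eij; apply: MLE_invmx_eq; rewrite ?eij ?orbT.
split; first by move=> i; apply: MLE_invmx_eq; rewrite ?eqxx.
split.
  by move=> i j ij nij; rewrite (MDE_invmx_nonedge sK MDE nij) (MLE.2.1 i j ij nij).
split; first by move=> i j _; apply: MDE_invmx_le.
split; first by move=> i; apply: MDE_invmx_nonedge => //; apply: sgE.2.
by move=> i j; apply: MDE_slackness.
Qed.

End Optimality.

Section Uniqueness.
Variable R : realType.

Lemma slackness_cross_le0 (s1 s2 k1 k2 k : R) : 0 <= s1 -> 0 <= s2 ->
  k1 <= k -> k2 <= k -> s1 * (k - k1) = 0 -> s2 * (k - k2) = 0 ->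
  (s1 - s2) * (k2 - k1) <= 0.
Proof.
move=> s1_ge0 s2_ge0 k1_le k2_le slack1 slack2.
have : 0 <= s1 * (k - k2) + s2 * (k - k1) by rewrite addr_ge0 // mulr_ge0 // subr_ge0.
have -> : (s1 - s2) * (k2 - k1) = s1 * (k - k1) + s2 * (k - k2) - (s1 * (k - k2) + s2 * (k - k1)).
  by ring.
by rewrite slack1 slack2 add0r sub0r oppr_le0.
Qed.

Lemma mde_system_unique d (E : rel 'I_d) (S Kh Sig1 Sig2 : 'M[R]_d) :
  posdef Sig1 -> posdef Sig2 ->
  mde_system E S Kh Sig1 -> mde_system E S Kh Sig2 -> Sig1 = Sig2.
Proof.
move=> P1 P2 [ge1 [_ [_ [nonedge1 [le1 [diag1 slack1]]]]]].
move=> [ge2 [_ [_ [nonedge2 [le2 [diag2 slack2]]]]]].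
set K1 := invmx Sig1 in nonedge1 le1 diag1 slack1 *.
set K2 := invmx Sig2 in nonedge2 le2 diag2 slack2 *.
set D := Sig1 - Sig2.
have sD : D^T = D by rewrite linearB /= P1.1 P2.1.
have sK1 : K1^T = K1 := sym_invmx P1.1.
have sK2 : K2^T = K2 := sym_invmx P2.1.
have term_le0 a b : D a b * (K2 - K1) b a <= 0.
  rewrite /D !mxE (sym_mxE sK1) (sym_mxE sK2).
  have [<-|ab] := eqVneq a b; first by rewrite diag1 diag2 subrr mulr0.
  have [eab|nab] := boolP (E a b).
    exact: slackness_cross_le0 (ge1 _ _ eab) (ge2 _ _ eab) (le1 _ _ eab) (le2 _ _ eab)
      (slack1 _ _ eab) (slack2 _ _ eab).
  by rewrite (nonedge1 _ _ ab nab).1 (nonedge2 _ _ ab nab).1 subrr mulr0.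
have K2DK1 : K2 *m D *m K1 = K2 - K1.
  rewrite mulmxBr mulmxBl (mulVmx (posdef_unitmx P2)) mul1mx.
  by rewrite -mulmxA (mulmxV (posdef_unitmx P1)) mulmx1.
apply/subr0_eq/(mxtrace_sandwich_le0 sD (posdef_invmx P2) (posdef_invmx P1)).
have -> : D *m K2 *m D *m K1 = D *m (K2 *m D *m K1) by rewrite !mulmxA.
rewrite K2DK1 /mxtrace.
by apply: sumr_le0 => a _; rewrite mxE; apply: sumr_le0 => b _.
Qed.
End Uniqueness.

Lemma trmx_sample_cov (R : realType) (n d : nat) (X : 'M[R]_(n, d)) :
  (sample_cov X)^T = sample_cov X.
Proof. by rewrite /sample_cov linearZ /= trmx_mul trmxK. Qed.

Theorem theorem5p1 (R : realType) (d n : nat) (E : rel 'I_d)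
  (X : 'M[R]_(n, d)) (Khat Sigc : 'M[R]_d) :
  simple_graph E -> (0 < n)%N ->
  is_MLE E (sample_cov X) Khat ->
  is_MDE E Khat Sigc ->
  mde_system E (sample_cov X) Khat Sigc /\
  (forall Sig : 'M[R]_d, posdef Sig ->
     mde_system E (sample_cov X) Khat Sig -> Sig = Sigc).
Proof.
move=> sgE _ MLE MDE.
have sys := MDE_solves_system sgE (trmx_sample_cov X) MLE MDE.
split=> // Sig PSig sysSig.
exact: mde_system_unique PSig MDE.1 sysSig sys.
Qed.
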